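(* Let $a^\circ_{n,k}(1324)$ be the number of cyclic permutations $\pi\in\mathfrak S_n$ whose one-line notation avoids $\delta_k=k(k-1)\cdots21$ and such that every cyclic rotation of the cycle form $C(\pi)$ avoids $1324$. Then for $n\ge3$, $a^\circ_{n,3}(1324)=2^{n-2}$, and for $k\ge4$, $a^\circ_{n,k}(1324)=F_{2n-3}$, where $F_m$ is the $m$th Fibonacci number ($F_1=F_2=1$, $F_{m}=F_{m-1}+F_{m-2}$).
   Context: A permutation $\pi\in\mathfrak S_n$ is cyclic if it consists of a single $n$-cycle. For cyclic $\pi$, $C(\pi)=(1,c_2,\dots,c_n)$ with $c_2=\pi(1)$, $c_{i+1}=\pi(c_i)$; its cyclic rotations are the sequences $c_ic_{i+1}\cdots c_nc_1\cdots c_{i-1}$ (with $c_1=1$). A sequence avoids a pattern $\sigma\in\mathfrak S_m$ if no subsequence of length $m$ is in the same relative order as $\sigma$. The one-line notation of $\pi$ is $\pi_1\cdots\pi_n$, $\pi_i=\pi(i)$. *)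

From mathcomp Require Import all_boot all_fingroup.
Set Implicit Arguments. Unset Strict Implicit. Unset Printing Implicit Defensive.

(* Permutations of 'I_n = {0,...,n-1}; values shifted by -1 w.r.t. the paper,
   which does not affect relative order (pattern avoidance). *)

Definition same_order (t sigma : seq nat) : bool :=
  (size t == size sigma) &&
  [forall i : 'I_(size t), forall j : 'I_(size t),
     (nth 0 t i < nth 0 t j) == (nth 0 sigma i < nth 0 sigma j)].

Definition avoids (s sigma : seq nat) : bool :=
  [forall m : (size s).-tuple bool, ~~ same_order (mask m s) sigma].

Definition oneline n (p : {perm 'I_n}) : seq nat := [seq val (p i) | i <- enum 'I_n].

Definition pfun n (p : {perm 'I_n}) (i : nat) : nat :=
  if insub i is Some j then val (p j) else i.

Definition cycle_form n (p : {perm 'I_n}) : seq nat := traject (pfun p) 0 n.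

Definition cyclic_perm n (p : {perm 'I_n}) : bool :=
  [exists x : 'I_n, #|porbit p x| == n].

Definition delta k : seq nat := rev (iota 0 k).
Definition p1324 : seq nat := [:: 0; 2; 1; 3].

Definition a_circ (n k : nat) : nat :=
  #|[set p : {perm 'I_n} | [&& cyclic_perm p, avoids (oneline p) (delta k) &
        [forall i : 'I_n, avoids (rot i (cycle_form p)) p1324]]]|.

Fixpoint fib (m : nat) : nat :=
  match m with 0 => 0 | 1 => 1 | (S ((S m'') as m')) => fib m' + fib m'' end.

(* Write the cycle of a cyclic permutation p of [0, n] starting from its maximum n,
   as n :: u, so that p maps every entry of the cycle to the next one, cyclically.
   All rotations of the cycle avoid 1324 iff u avoids 132 and 3241, and the words
   on [0, m] with this property are exactly a ++ [m] and [j, j+1, ..., m] ++ b, for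
   words a on [0, m) and b on [0, j) of the same kind and 0 < j <= m; this
   recursion yields F_{2m-1} such words on [0, m).  In the one-line notation of p,
   the first construction (m+1 is inserted after m in the cycle) neither creates
   nor destroys a 321 and creates no 4321; the second one creates no 4321 and
   creates a 321 iff j < m.  Hence 4321 is always avoided, and 321 is avoided for
   exactly 2^{m-1} of the words on [0, m), those built with j = m only. *)

From mathcomp Require Import all_boot all_fingroup zify.
Set Implicit Arguments. Unset Strict Implicit. Unset Printing Implicit Defensive.

Lemma subseq_catE (T : eqType) (t s1 s2 : seq T) : subseq t (s1 ++ s2) ->
  exists t1 t2, [/\ t = t1 ++ t2, subseq t1 s1 & subseq t2 s2].
Proof.
case/subseqP=> m sz_m ->; set m1 := take (size s1) m.
have sz_m1 : size m1 = size s1 by rewrite size_takel // sz_m size_cat leq_addr.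
exists (mask m1 s1), (mask (drop (size s1) m) s2).
by rewrite -mask_cat // cat_take_drop !mask_subseq.
Qed.

Lemma subseq_cat_split (T : eqType) (t s1 s2 : seq T) : subseq t (s1 ++ s2) ->
  exists k, subseq (take k t) s1 /\ subseq (drop k t) s2.
Proof.
case/subseq_catE=> t1 [t2 [-> sub1 sub2]].
by exists (size t1); rewrite take_size_cat ?drop_size_cat.
Qed.

Lemma cat_subseqE (T : eqType) (t1 t2 s : seq T) : subseq (t1 ++ t2) s ->
  exists s1 s2, [/\ s = s1 ++ s2, subseq t1 s1 & subseq t2 s2].
Proof.
elim: s t1 => [|y s IHs] [|x t1] /=.
- by case: t2 => // _; exists [::], [::].
- by [].
- by move=> sub_t2; exists [::], (y :: s); rewrite sub0seq.
case: eqP => [->|ne_xy] sub_s.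
  have [s1 [s2 [-> sub1 sub2]]] := IHs t1 sub_s.
  by exists (y :: s1), s2; rewrite /= eqxx.
have [s1 [s2 [-> sub1 sub2]]] := IHs (x :: t1) sub_s.
by exists (y :: s1), s2; split; rewrite //= ifN_eq //; apply/eqP.
Qed.

Lemma subseq_cons2E (T : eqType) (x y : T) t s :
  subseq (x :: t) (y :: s) -> (x = y /\ subseq t s) \/ subseq (x :: t) s.
Proof. by rewrite /=; case: eqP => [->|_]; [left|right]. Qed.

Lemma subseq_tail (T : eqType) (x y : T) t s : subseq (x :: t) (y :: s) -> subseq t s.
Proof. by case/subseq_cons2E=> [[_ //]|/cons_subseq]. Qed.

Lemma subseq_rotE (T : eqType) i (t w : seq T) : subseq t (rot i w) ->
  exists k, subseq (rot k t) w.
Proof.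
case/subseq_cat_split=> k [sub_drop sub_take]; exists k.
by rewrite -(cat_take_drop i w); apply: cat_subseq.
Qed.

Lemma subseq_bounded (t s : seq nat) m :
  subseq t s -> {in s, forall x, x < m} -> all (gtn m) t.
Proof. by move=> sub_t lt_s; apply/allP=> x /(mem_subseq sub_t) /lt_s. Qed.

Lemma mem_perm_iota u m x : perm_eq u (iota 0 m) -> (x \in u) = (x < m).
Proof. by move/perm_mem => ->; rewrite mem_iota. Qed.

Lemma iota0S m : iota 0 m.+1 = iota 0 m ++ [:: m].
Proof. by rewrite -addn1 iotaD. Qed.

Lemma subseq_iota m k t :
  subseq t (iota m k) = sorted ltn t && all (fun x => m <= x < m + k) t.
Proof.
apply/idP/andP=> [sub_t|[]].
  split; first exact: (subseq_sorted ltn_trans sub_t (iota_ltn_sorted m k)).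
  by apply/allP=> x /(mem_subseq sub_t); rewrite mem_iota.
elim: k m t => [|k IHk] m [|x t] //=; first by move=> _ /andP []; lia.
move=> sorted_xt /andP [x_in t_in].
have lt_x_t := order_path_min ltn_trans sorted_xt.
have t_in' : all (fun y => m.+1 <= y < m.+1 + k) t.
  by apply/allP=> y y_t; have := allP lt_x_t y y_t; have := allP t_in y y_t; lia.
case: eqP => [_|ne_xm]; first exact: IHk (path_sorted sorted_xt) t_in'.
by apply: IHk => //=; rewrite t_in' andbT; lia.
Qed.

Lemma pairs_lt_sorted (a : seq nat) :
  (forall x y, subseq [:: x; y] a -> x < y) -> sorted ltn a.
Proof.
elim: a => [|x [|y a] IHa] // lt_pairs.
rewrite /= lt_pairs ?(prefix_subseq [:: x; y]) //=.
by apply: IHa => v w sub_vw; apply: lt_pairs; apply: subseq_trans sub_vw (subseq_cons _ x).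
Qed.

Lemma cat_sorted_above_iota m (a b : seq nat) : perm_eq (a ++ b) (iota 0 m) ->
  sorted ltn a -> {in a & b, forall x y, y < x} ->
  a = iota (size b) (m - size b) /\ perm_eq b (iota 0 (size b)).
Proof.
move=> perm_ab sorted_a a_gt_b; set j := size b.
have sz_ab : size a + j = m by rewrite -size_cat (perm_size perm_ab) size_iota.
have uniq_b : uniq b.
  by have := perm_uniq perm_ab; rewrite iota_uniq cat_uniq => /and3P [].
have : sort leq b ++ a = iota 0 j ++ iota j (m - j).
  rewrite -iotaD subnKC; last by rewrite -sz_ab leq_addl.
  apply: (irr_sorted_eq ltn_trans ltnn _ (iota_ltn_sorted 0 m)); last first.
    by move=> x; rewrite -(perm_mem perm_ab) !mem_cat mem_sort orbC.
  rewrite (sorted_pairwise ltn_trans) pairwise_cat -!(sorted_pairwise ltn_trans) sorted_a.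
  rewrite ltn_sorted_uniq_leq sort_sorted ?sort_uniq ?uniq_b ?andbT //; last exact: leq_total.
  by apply/allrelP=> y x; rewrite mem_sort => y_b x_a; apply: a_gt_b.
move/eqP; rewrite eqseq_cat ?size_sort ?size_iota // => /andP [/eqP sort_b /eqP ->].
by split=> //; have := permEl (perm_sort leq b); rewrite sort_b perm_sym.
Qed.

Lemma same_orderP t sg : reflect (size t = size sg /\
    forall i j, i < size t -> j < size t ->
      (nth 0 t i < nth 0 t j) = (nth 0 sg i < nth 0 sg j))
  (same_order t sg).
Proof.
apply: (iffP andP) => [[/eqP sz /forallP ord_t]|[sz ord_t]].
  split=> // i j lt_i lt_j.
  by have /forallP/(_ (Ordinal lt_j))/eqP := ord_t (Ordinal lt_i).
by split; [rewrite sz | apply/forallP=> i; apply/forallP=> j; rewrite ord_t].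
Qed.

Lemma avoidsPn s sg :
  reflect (exists2 t, subseq t s & same_order t sg) (~~ avoids s sg).
Proof.
rewrite negb_forall; apply: (iffP existsP) => [[m]|[t /subseqP [m sz_m ->]]].
  by rewrite negbK => ord_m; exists (mask m s); rewrite ?mask_subseq.
by exists (Tuple (introT eqP sz_m)); rewrite negbK.
Qed.

Definition has1324 (s : seq nat) :=
  exists a b c d, subseq [:: a; b; c; d] s /\ a < c /\ c < b /\ b < d.

Lemma has1324P s : has1324 s <-> ~~ avoids s p1324.
Proof.
split=> [[a [b [c [d [sub_s ord_abcd]]]]]|/avoidsPn [t sub_t /same_orderP []]].
  apply/avoidsPn; exists [:: a; b; c; d] => //; apply/same_orderP; split=> //.
  by move=> [|[|[|[|i]]]] [|[|[|[|j]]]] //= _ _; lia.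
case: t sub_t => [|a [|b [|c [|d [|]]]]] //= sub_t _ ord_t.
exists a, b, c, d; split=> //.
by move: (ord_t 0 2) (ord_t 2 1) (ord_t 1 3) => /= -> // -> // ->.
Qed.

Lemma nth_delta k i : i < k -> nth 0 (delta k) i = k - i.+1.
Proof. by move=> lt_ik; rewrite nth_rev ?size_iota // nth_iota //; lia. Qed.

Lemma delta3Pn s : ~~ avoids s (delta 3) <->
  exists a b c, subseq [:: a; b; c] s /\ c < b /\ b < a.
Proof.
split=> [/avoidsPn [t sub_t /same_orderP []]|[a [b [c [sub_s ord_abc]]]]].
  case: t sub_t => [|a [|b [|c [|]]]] //= sub_t _ ord_t.
  exists a, b, c; split=> //.
  by move: (ord_t 1 0) (ord_t 2 1) => /= -> // -> //.
apply/avoidsPn; exists [:: a; b; c] => //; apply/same_orderP; split=> //.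
by move=> [|[|[|i]]] [|[|[|j]]] //= _ _; lia.
Qed.

Lemma delta_desc4 s k : 4 <= k -> ~~ avoids s (delta k) ->
  exists a b c d, subseq [:: a; b; c; d] s /\ d < c /\ c < b /\ b < a.
Proof.
move=> le4k /avoidsPn [t sub_t /same_orderP []].
rewrite size_rev size_iota.
case: t sub_t => [|a [|b [|c [|d t]]]] //= sub_t sz_t; try lia.
move=> ord_t; exists a, b, c, d; split.
  exact: subseq_trans (prefix_subseq [:: a; b; c; d] t) sub_t.
have := ord_t 1 0 erefl erefl; have := ord_t 2 1 erefl erefl.
have := ord_t 3 2 erefl erefl; rewrite /= !nth_delta; lia.
Qed.

Definition desc3 (g : nat -> nat) n := exists x y z,
  x < y /\ y < z /\ z < n /\ g z < g y /\ g y < g x.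

Definition desc4 (g : nat -> nat) n := exists x1 x2 x3 x4,
  x1 < x2 /\ x2 < x3 /\ x3 < x4 /\ x4 < n /\ g x4 < g x3 /\ g x3 < g x2 /\ g x2 < g x1.

Lemma subseq_map_iotaE g n (t : seq nat) : subseq t (map g (iota 0 n)) ->
  exists2 xs, sorted ltn xs && all (gtn n) xs & t = map g xs.
Proof.
case/subseqP=> m sz_m ->; exists (mask m (iota 0 n)); last by rewrite map_mask.
by have := mask_subseq m (iota 0 n); rewrite subseq_iota.
Qed.

Lemma map_iota_delta3Pn g n : ~~ avoids (map g (iota 0 n)) (delta 3) <-> desc3 g n.
Proof.
rewrite delta3Pn; split=> [[a [b [c [/subseq_map_iotaE [xs]]]]]|].
  case: xs => [|x [|y [|z [|]]]] //=; rewrite !andbT => ord_xyz [-> -> ->] ord_abc.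
  by exists x, y, z; lia.
case=> x [y [z ord_xyz]]; exists (g x), (g y), (g z); split; last lia.
by apply: (map_subseq g (s1 := [:: x; y; z])); rewrite subseq_iota /=; lia.
Qed.

Lemma map_iota_avoids_delta g n k :
  4 <= k -> ~ desc4 g n -> avoids (map g (iota 0 n)) (delta k).
Proof.
move=> le4k no_desc4; apply/negPn/negP => /(delta_desc4 le4k).
case=> a [b [c [d [/subseq_map_iotaE [xs]]]]].
case: xs => [|x1 [|x2 [|x3 [|x4 [|]]]]] //=; rewrite !andbT => ord_x [-> -> -> ->] ord_g.
by apply: no_desc4; exists x1, x2, x3, x4; lia.
Qed.

(** * Rotations of the cycle *)

Definition rot_has1324 (w : seq nat) := exists i, has1324 (rot i w).

Lemma rot_has1324_rot j w : rot_has1324 (rot j w) <-> rot_has1324 w.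
Proof.
split=> -[i]; first by rewrite rot_rot_add; exists (rot_add w j i).
by rewrite -{1}(rotK j w) /rotr rot_rot_add => ?; eexists; eassumption.
Qed.

Lemma avoids1324_rotP n w : size w = n ->
  [forall i : 'I_n, avoids (rot i w) p1324] <-> ~ rot_has1324 w.
Proof.
move=> <-; split=> [/forallP avoid_w [i]|no_rot]; last first.
  apply/forallP=> i; apply/negPn/negP=> contains_i.
  by apply: no_rot; exists i; apply/has1324P.
have [lt_i_w|le_w_i] := ltnP i (size w).
  by rewrite has1324P (avoid_w (Ordinal lt_i_w)).
rewrite rot_oversize //; case: w avoid_w {le_w_i} => [|x w] avoid_w.
  by case=> a [b [c [d []]]].
by rewrite has1324P -(rot0 (x :: w)) (avoid_w ord0).
Qed.

Definition has132 (u : seq nat) :=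
  exists a b c, subseq [:: a; b; c] u /\ a < c /\ c < b.

Definition has3241 (u : seq nat) :=
  exists c b d a, subseq [:: c; b; d; a] u /\ a < b /\ b < c /\ c < d.

Lemma subseq_max_cons M u x t : {in u, forall y, y < M} ->
  subseq (x :: t) (M :: u) -> (exists2 y, y \in t & x < y) -> subseq (x :: t) u.
Proof.
move=> lt_u /subseq_cons2E [[-> sub_t] [y /(mem_subseq sub_t) /lt_u]|//]; lia.
Qed.

(* In a rotation of [M :: u] containing 1324, [M] can only play the role of 4. *)
Lemma rot_has1324_max_cons M u : {in u, forall x, x < M} ->
  rot_has1324 (M :: u) <-> has132 u \/ has3241 u.
Proof.
move=> lt_u; split=> [[i [a [b [c [d [/subseq_rotE [k sub_w] ord_abcd]]]]]]|].
  have below x y t : subseq (x :: t) (M :: u) -> y \in t -> x < y -> subseq (x :: t) u.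
    by move=> sub_xt y_t lt_xy; apply: (subseq_max_cons lt_u sub_xt); exists y.
  have from_abcd : subseq [:: a; b; c; d] (M :: u) -> has132 u.
    move=> sub_abcd; exists a, b, c; split; last lia.
    apply: subseq_trans (below _ d _ sub_abcd _ _); rewrite ?inE ?eqxx ?orbT //; last lia.
    exact: prefix_subseq [:: a; b; c] [:: d].
  case: k sub_w => [|[|[|[|k]]]] /= sub_w; try by left; apply: from_abcd.
  - right; exists b, c, d, a; split; last lia.
    by apply: (below _ d _ sub_w); rewrite ?inE ?eqxx ?orbT //; lia.
  - left; exists c, d, b; split; last lia.
    apply: subseq_trans (below _ d _ sub_w _ _); rewrite ?inE ?eqxx ?orbT //; last lia.
    exact: (cat_subseq (subseq_refl [:: c; d]) (suffix_subseq [:: a] [:: b])).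
  - by left; exists a, b, c; split; [exact: subseq_tail sub_w | lia].
case=> [[a [b [c [sub_u ord_abc]]]]|[c [b [d [a [sub_u ord_abcd]]]]]].
  exists 1; rewrite rot1_cons -cats1; exists a, b, c, M; split.
    exact: cat_subseq sub_u (subseq_refl [:: M]).
  by have := lt_u b (mem_subseq sub_u _); rewrite !inE eqxx orbT => /(_ isT); lia.
have [s1 [s2 [def_u sub1 sub2]]] := cat_subseqE (t1 := [:: c; b; d]) (t2 := [:: a]) sub_u.
exists (size (M :: s1)); rewrite def_u -cat_cons rot_size_cat.
exists a, c, b, d; split; last lia.
exact: cat_subseq sub2 (subseq_trans sub1 (subseq_cons s1 M)).
Qed.

(** * Words avoiding 132 and 3241 *)

Definition avoids132_3241 (u : seq nat) := ~ has132 u /\ ~ has3241 u.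

Lemma avoids132_3241_subseq t u :
  subseq t u -> avoids132_3241 u -> avoids132_3241 t.
Proof.
move=> sub_t [no132 no3241]; split=> [[a [b [c [sub ord]]]]|[c [b [d [a [sub ord]]]]]].
  by apply: no132; exists a, b, c; split; first exact: subseq_trans sub_t.
by apply: no3241; exists c, b, d, a; split; first exact: subseq_trans sub_t.
Qed.

Lemma avoids132_3241_cat_max a m : {in a, forall x, x < m} ->
  avoids132_3241 a -> avoids132_3241 (a ++ [:: m]).
Proof.
move=> lt_a [no132 no3241]; split.
  case=> x [y [z [/subseq_cat_split [k [sub_a sub_m]] ord]]].
  case: k sub_a sub_m => [|[|[|k]]] sub_a sub_m; try by have := size_subseq sub_m.
    move: sub_m; rewrite [drop _ _]/= sub1seq inE.
    by have := subseq_bounded sub_a lt_a; rewrite /=; lia.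
  by apply: no132; exists x, y, z.
case=> c [b [d [x [/subseq_cat_split [k [sub_a sub_m]] ord]]]].
case: k sub_a sub_m => [|[|[|[|k]]]] sub_a sub_m; try by have := size_subseq sub_m.
  move: sub_m; rewrite [drop _ _]/= sub1seq inE.
  by have := subseq_bounded sub_a lt_a; rewrite /=; lia.
by apply: no3241; exists c, b, d, x.
Qed.

Lemma avoids132_3241_iota_max j m b : j <= m -> {in b, forall x, x < j} ->
  avoids132_3241 b -> avoids132_3241 (iota j (m - j) ++ m :: b).
Proof.
move=> le_jm lt_b [no132 no3241].
have tail_lt z t : subseq (z :: t) (m :: b) -> all (gtn j) t.
  by move/subseq_tail/subseq_bounded; apply.
have head_le z t : subseq (z :: t) (m :: b) -> (z == m) || (z < j).
  by move/mem_subseq/(_ z (mem_head _ _)); rewrite inE => /orP [->|/lt_b ->]; rewrite ?orbT.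
split.
  case=> x [y [z [/subseq_cat_split [k [sub_i sub_mb]] ord]]].
  case: k sub_i sub_mb => [|[|[|k]]] sub_i sub_mb;
    rewrite [take _ _]/= subseq_iota /= in sub_i; rewrite [drop _ _]/= in sub_mb.
  - case/subseq_cons2E: sub_mb => [[x_m sub_b]|sub_b].
      by have := subseq_bounded sub_b lt_b; rewrite /=; lia.
    by apply: no132; exists x, y, z.
  - by move/tail_lt: sub_mb => /=; lia.
  - by move/head_le: sub_mb => /=; lia.
  - by lia.
case=> c [y [d [x [/subseq_cat_split [k [sub_i sub_mb]] ord]]]].
case: k sub_i sub_mb => [|[|[|[|k]]]] sub_i sub_mb;
  rewrite [take _ _]/= subseq_iota /= in sub_i; rewrite [drop _ _]/= in sub_mb; try lia.
- case/subseq_cons2E: sub_mb => [[c_m sub_b]|sub_b].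
    by have := subseq_bounded sub_b lt_b; rewrite /=; lia.
  by apply: no3241; exists c, y, d, x.
- by move/tail_lt: sub_mb => /=; lia.
Qed.

Lemma avoids132_3241_max_above a m b : uniq (a ++ m :: b) -> {in b, forall y, y < m} ->
  avoids132_3241 (a ++ m :: b) -> {in a & b, forall x y, y < x}.
Proof.
move=> uniq_u lt_b [no132 _] x y x_a y_b; have [//|lt_xy|eq_xy] := ltngtP y x.
  case: no132; exists x, m, y; split; last by have := lt_b y y_b; lia.
  apply: (cat_subseq (_ : subseq [:: x] a) (cat_subseq (subseq_refl [:: m]) _));
    by rewrite sub1seq.
move: uniq_u; rewrite cat_uniq => /and3P [_ /hasP []].
by exists y; [rewrite in_cons y_b orbT | rewrite eq_xy].
Qed.

Lemma avoids132_3241_max_sorted a m b0 b : uniq a -> {in a, forall x, b0 < x < m} ->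
  avoids132_3241 (a ++ [:: m, b0 & b]) -> sorted ltn a.
Proof.
move=> uniq_a lt_a [_ no3241]; apply: pairs_lt_sorted => x y sub_xy.
have [x_a y_a] : x \in a /\ y \in a by split; apply: (mem_subseq sub_xy); rewrite !inE eqxx ?orbT.
have [//|lt_yx|eq_xy] := ltngtP x y.
  case: no3241; exists x, y, m, b0; split.
    exact: (cat_subseq sub_xy (prefix_subseq [:: m; b0] b)).
  by have := lt_a x x_a; have := lt_a y y_a; lia.
by have := subseq_uniq sub_xy uniq_a; rewrite eq_xy /= inE eqxx.
Qed.

Lemma avoids132_3241_split m u : perm_eq u (iota 0 m.+1) -> avoids132_3241 u ->
  (exists2 a, u = a ++ [:: m] & perm_eq a (iota 0 m) /\ avoids132_3241 a) \/
  (exists j b, [/\ 0 < j <= m, u = iota j (m - j) ++ m :: b,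
                   perm_eq b (iota 0 j) & avoids132_3241 b]).
Proof.
move=> perm_u ok_u; have uniq_u : uniq u by rewrite (perm_uniq perm_u) iota_uniq.
have m_u : m \in u by rewrite (mem_perm_iota _ perm_u).
case/splitPr: m_u perm_u ok_u uniq_u => a b perm_u ok_u uniq_u.
have perm_ab : perm_eq (a ++ b) (iota 0 m).
  rewrite -(perm_cat2r [:: m]) -iota0S; apply: perm_trans perm_u.
  by rewrite -catA perm_cat2l -cat1s perm_catC.
have lt_ab x : x \in a ++ b -> x < m by rewrite (mem_perm_iota _ perm_ab).
have ok_a : avoids132_3241 a := avoids132_3241_subseq (prefix_subseq a _) ok_u.
have ok_b : avoids132_3241 b.
  by apply: avoids132_3241_subseq ok_u; apply: subseq_trans (suffix_subseq a _); apply: subseq_cons.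
case: b => [|b0 b] in perm_u ok_u uniq_u perm_ab lt_ab ok_b *.
  by left; exists a; rewrite ?cats0 in perm_ab.
have a_gt_b : {in a & b0 :: b, forall x y, y < x}.
  by apply: avoids132_3241_max_above ok_u => // y y_b; rewrite lt_ab // mem_cat y_b orbT.
have sorted_a : sorted ltn a.
  apply: avoids132_3241_max_sorted ok_u; first exact: subseq_uniq (prefix_subseq a _) uniq_u.
  by move=> x x_a; rewrite a_gt_b ?mem_head // lt_ab // mem_cat x_a.
have [def_a perm_b] := cat_sorted_above_iota perm_ab sorted_a a_gt_b.
right; exists (size (b0 :: b)), (b0 :: b); split=> //; last by rewrite -def_a.
by have := perm_size perm_ab; rewrite size_cat size_iota /=; lia.
Qed.

(* [words m] lists the permutations of [0, m) avoiding 132 and 3241 (see [mem_words]);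
   [words_upto m = [:: words 0; ...; words m]] makes its recursion structural. *)
Definition words_step m (W : seq (seq (seq nat))) : seq (seq nat) :=
  [seq a ++ [:: m] | a <- nth [::] W m] ++
  flatten [seq [seq iota j (m - j) ++ m :: b | b <- nth [::] W j] | j <- iota 1 m].

Fixpoint words_upto m : seq (seq (seq nat)) :=
  if m is m'.+1 then rcons (words_upto m') (words_step m' (words_upto m'))
  else [:: [:: [::]]].

Definition words m := nth [::] (words_upto m) m.

Lemma size_words_upto m : size (words_upto m) = m.+1.
Proof. by elim: m => //= m IHm; rewrite size_rcons IHm. Qed.

Lemma nth_words_upto m j : j <= m -> nth [::] (words_upto m) j = words j.
Proof.
elim: m => [|m IHm] le_jm; first by case: j le_jm.
rewrite /= nth_rcons size_words_upto; case: ltnP => [lt_jm|le_mj]; first exact: IHm.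
have -> : j = m.+1 by lia.
by rewrite /words /= nth_rcons size_words_upto ltnn eqxx.
Qed.

Lemma wordsS m : words m.+1 = [seq a ++ [:: m] | a <- words m] ++
  flatten [seq [seq iota j (m - j) ++ m :: b | b <- words j] | j <- iota 1 m].
Proof.
rewrite {1}/words /= nth_rcons size_words_upto ltnn eqxx /words_step nth_words_upto //.
congr (_ ++ flatten _); apply/eq_in_map => j; rewrite mem_iota => /andP [_ lt_jm].
by rewrite nth_words_upto // -ltnS.
Qed.

Lemma wordsSP m u : u \in words m.+1 ->
  (exists2 a, a \in words m & u = a ++ [:: m]) \/
  (exists j b, [/\ 0 < j <= m, b \in words j & u = iota j (m - j) ++ m :: b]).
Proof.
rewrite wordsS mem_cat => /orP [/mapP [a a_m ->]|]; first by left; exists a.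
case/flattenP=> _ /mapP [j j_m ->] /mapP [b b_j ->].
by right; exists j, b; split=> //; move: j_m; rewrite mem_iota; lia.
Qed.

Lemma perm_cat_max m a : perm_eq (a ++ [:: m]) (iota 0 m.+1) = perm_eq a (iota 0 m).
Proof. by rewrite iota0S perm_cat2r. Qed.

Lemma perm_iota_max m j b : j <= m ->
  perm_eq (iota j (m - j) ++ m :: b) (iota 0 m.+1) = perm_eq b (iota 0 j).
Proof.
move=> le_jm; rewrite iota0S -[m in iota 0 m](subnKC le_jm) iotaD /=.
by rewrite -cat1s catA perm_catC -catA perm_cat2r.
Qed.

Lemma mem_words m u : u \in words m <-> perm_eq u (iota 0 m) /\ avoids132_3241 u.
Proof.
elim/ltn_ind: m u => -[|m] IHm u.
  rewrite /words /= inE; split=> [/eqP ->|[/perm_size/size0nil -> //]].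
  by split=> //; split=> [[a [b [c []]]]|[a [b [c [d []]]]]].
rewrite wordsS mem_cat; split.
  case/orP=> [/mapP [a a_m ->]|/flattenP [_ /mapP [j j_m ->] /mapP [b b_j ->]]].
    have [perm_a ok_a] := (IHm m (ltnSn m) a).1 a_m.
    rewrite perm_cat_max; split=> //; apply: avoids132_3241_cat_max ok_a => x.
    by rewrite (mem_perm_iota _ perm_a).
  move: j_m; rewrite mem_iota => /andP [lt0j lt_jm]; rewrite add1n ltnS in lt_jm.
  have [perm_b ok_b] := (IHm j (leq_ltn_trans lt_jm (ltnSn m)) b).1 b_j.
  rewrite perm_iota_max //; split=> //; apply: avoids132_3241_iota_max ok_b => // x.
  by rewrite (mem_perm_iota _ perm_b).
case=> perm_u /(avoids132_3241_split perm_u) [[a -> [perm_a ok_a]]|[j [b [j_m -> perm_b ok_b]]]].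
  by apply/orP; left; apply/mapP; exists a => //; apply/IHm.
apply/orP; right; apply/flattenP; exists [seq iota j (m - j) ++ m :: b' | b' <- words j].
  by apply/mapP; exists j => //; rewrite mem_iota; lia.
by apply/mapP; exists b => //; apply/IHm => //; lia.
Qed.

Lemma uniq_flatten_key (I T : eqType) (key : T -> I) (L : I -> seq T) (s : seq I) :
  uniq s -> {in s, forall j, uniq (L j) /\ {in L j, forall x, key x = j}} ->
  uniq (flatten (map L s)).
Proof.
elim: s => [|j s IHs] //= /andP [j_s uniq_s] L_ok.
have [uniq_j key_j] := L_ok j (mem_head j s).
rewrite cat_uniq uniq_j IHs ?andbT //; last by move=> i i_s; apply: L_ok; rewrite inE i_s orbT.
apply/hasP=> -[x /flattenP [_ /mapP [i i_s ->] x_i] x_j].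
have [_ key_i] : _ /\ _ := L_ok i (mem_behead (s := j :: s) i_s).
by move: j_s; rewrite -(key_j x x_j) (key_i x x_i) i_s.
Qed.

(* Recovers [j] from [iota j (m - j) ++ m :: b], and is [0] on [a ++ [:: m]]. *)
Definition max_key m (u : seq nat) := m - index m u.

Lemma max_key_iota m j b : j <= m -> max_key m (iota j (m - j) ++ m :: b) = j.
Proof.
move=> le_jm; rewrite /max_key index_cat mem_iota subnKC // ltnn andbF /=.
by rewrite eqxx size_iota addn0 subKn.
Qed.

Lemma uniq_words m : uniq (words m).
Proof.
elim/ltn_ind: m => -[|m] IHm //; rewrite wordsS cat_uniq.
have max_notin a : a \in words m -> m \notin a.
  by case/mem_words=> perm_a _; rewrite (mem_perm_iota _ perm_a) ltnn.
apply/and3P; split.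
- by rewrite map_inj_uniq ?IHm // => a a'; rewrite !cats1; apply: rcons_injl.
- apply/hasP=> -[_ /flattenP [_ /mapP [j j_m ->] /mapP [b _ ->]] /mapP [a a_m]].
  move/(congr1 (max_key m)); move: j_m; rewrite mem_iota => /andP [lt0j lt_jm].
  rewrite max_key_iota; last lia.
  rewrite /max_key index_cat (negbTE (max_notin a a_m)) /= eqxx addn0.
  by case/mem_words: a_m => /perm_size ->; rewrite size_iota subnn; lia.
set L := fun j => [seq iota j (m - j) ++ m :: b | b <- words j].
apply: (@uniq_flatten_key nat (seq nat) (max_key m) L) => [|j]; first exact: iota_uniq.
rewrite mem_iota => /andP [lt0j lt_jm]; split.
  have uniq_j : uniq (words j) by apply: IHm; lia.
  by rewrite map_inj_uniq // => b b' /eqP; rewrite eqseq_cat // => /andP [_ /eqP [->]].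
by move=> _ /mapP [b _ ->]; rewrite max_key_iota //; lia.
Qed.

Lemma sum_fib_odd k : sumn [seq fib (2 * j - 1) | j <- iota 1 k] = fib (2 * k).
Proof.
elim: k => // k IHk; rewrite -[k.+1]addn1 iotaD map_cat sumn_cat IHk /= addn0.
have -> : (2 * (1 + k) - 1) = (2 * k).+1 by lia.
have -> : 2 * (k + 1) = (2 * k).+2 by lia.
by rewrite addnC.
Qed.

Lemma size_words m : 0 < m -> size (words m) = fib (2 * m - 1).
Proof.
elim/ltn_ind: m => -[//|[//|m]] IHm _.
rewrite wordsS size_cat size_map size_flatten /shape -map_comp IHm //.
rewrite (eq_in_map _ (fun j => fib (2 * j - 1)) _).1 ?sum_fib_odd => [|j]; last first.
  by rewrite mem_iota /= size_map => /andP [lt0j lt_jm]; apply: IHm; lia.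
have -> : 2 * m.+2 - 1 = (2 * m).+3 by lia.
have -> : 2 * m.+1 - 1 = (2 * m).+1 by lia.
have -> : 2 * m.+1 = (2 * m).+2 by lia.
by rewrite addnC.
Qed.

Section NextInWords.
Variable T : eqType.
Implicit Types (x y z : T) (s : seq T).

Lemma next_insert x z y s : x != z -> next [:: x, z & s] y =
  if y == x then z else if y == z then next (x :: s) x else next (x :: s) y.
Proof.
move=> neq_xz; rewrite /next /=; case: eqP => // neq_yx.
case: (y =P z) => [->|neq_yz]; case: s => [|w s] /=; rewrite ?eqxx //.
all: by rewrite (introF eqP neq_yz) (introF eqP neq_yx).
Qed.

Lemma next_cat_cons2 s1 s2 x y :
  uniq (s1 ++ [:: x, y & s2]) -> next (s1 ++ [:: x, y & s2]) x = y.
Proof. by move=> uniq_w; rewrite -(next_rot (size s1) uniq_w) rot_size_cat /= eqxx. Qed.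

Lemma next_last y s x : uniq (y :: s ++ [:: x]) -> next (y :: s ++ [:: x]) x = y.
Proof.
by move=> uniq_w; rewrite -(next_rot (size (y :: s)) uniq_w) -cat_cons rot_size_cat /= eqxx.
Qed.

End NextInWords.

Lemma perm_max_cons m u : perm_eq u (iota 0 m) -> perm_eq (m :: u) (iota 0 m.+1).
Proof. by move=> perm_u; rewrite iota0S -cat1s perm_catC perm_cat2r. Qed.

Lemma uniq_max_cons m u : perm_eq u (iota 0 m) -> uniq (m :: u).
Proof. by move/perm_max_cons/perm_uniq => ->; apply: iota_uniq. Qed.

Lemma next_max_cons_le m u :
  perm_eq u (iota 0 m) -> forall x, x <= m -> next (m :: u) x <= m.
Proof.
move=> /perm_max_cons perm_mu x le_xm.
by rewrite -ltnS -(mem_perm_iota _ perm_mu) mem_next (mem_perm_iota _ perm_mu).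
Qed.

Lemma next_max_cons_max m u : perm_eq u (iota 0 m) -> 0 < m -> next (m :: u) m < m.
Proof.
case: u => [|x u] perm_u lt0m; first by have := perm_size perm_u; rewrite size_iota /=; lia.
by rewrite /next /= eqxx -(mem_perm_iota _ perm_u) mem_head.
Qed.

Lemma next_max_cons_hits m u : perm_eq u (iota 0 m) -> 0 < m ->
  exists2 x, x < m & next (m :: u) x = m.
Proof.
move=> perm_u lt0m; have uniq_mu := uniq_max_cons perm_u.
exists (prev (m :: u) m); last exact: next_prev.
have : prev (m :: u) m \in m :: u by rewrite mem_prev mem_head.
rewrite in_cons (mem_perm_iota _ perm_u) => /orP [/eqP prev_m|//].
have := next_prev uniq_mu m; rewrite prev_m => next_m.
by have := next_max_cons_max perm_u lt0m; rewrite next_m ltnn.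
Qed.

Lemma next_cat_max m a : perm_eq a (iota 0 m) -> forall x,
  next (m.+1 :: a ++ [:: m]) x =
  if x == m then m.+1 else if x == m.+1 then next (m :: a) m else next (m :: a) x.
Proof.
move=> perm_a x; have uniq_w : uniq [:: m, m.+1 & a].
  rewrite /= inE negb_or ltn_eqF //= !(mem_perm_iota _ perm_a) ltnn ltnNge leqnSn /=.
  by rewrite (perm_uniq perm_a) iota_uniq.
by rewrite cats1 -rcons_cons -rot1_cons next_rot // next_insert // ltn_eqF.
Qed.

Section NextIotaMax.
Variables (m j : nat) (b : seq nat).
Hypotheses (lt0j : 0 < j) (le_jm : j <= m) (perm_b : perm_eq b (iota 0 j)).
Local Notation f := (next (j :: b)).
Local Notation f' := (next (m.+1 :: iota j (m - j) ++ m :: b)).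

Let uniq_w : uniq (m.+1 :: iota j (m - j) ++ m :: b).
Proof. by apply: uniq_max_cons; rewrite perm_iota_max. Qed.

Let uniq_c : uniq (j :: b). Proof. exact: uniq_max_cons. Qed.

Let run_eq : iota j (m - j) ++ m :: b = iota j (m.+1 - j) ++ b.
Proof. by rewrite subSn // -addn1 iotaD subnKC // -catA. Qed.

Lemma next_iota_max_top : f' m.+1 = j.
Proof. by rewrite run_eq subSn // /next /= eqxx. Qed.

Lemma next_iota_max_run x : j <= x < m -> f' x = x.+1.
Proof.
case/andP=> le_jx lt_xm; have := uniq_w; rewrite run_eq.
have -> : m.+1 - j = (x - j) + (m - x.+1).+2 by lia.
by rewrite iotaD subnKC // [iota x _]/= -catA -cat_cons => uniq_x; rewrite next_cat_cons2.
Qed.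

Lemma next_iota_max_max : f' m = f j.
Proof.
have [b0 [b' def_b]] : exists b0 b', b = b0 :: b'.
  case: b perm_b => [|b0 b'] /perm_size; rewrite size_iota; last by exists b0, b'.
  by move=> /= j0; exfalso; lia.
have := uniq_c; have := uniq_w; rewrite def_b -cat_cons => uniq_w' uniq_c'.
by rewrite next_cat_cons2 // (next_cat_cons2 (s1 := [::])).
Qed.

Lemma next_iota_max_low x : x < j -> f' x = if f x == j then m.+1 else f x.
Proof.
rewrite -(mem_perm_iota _ perm_b) => x_b.
move: uniq_c uniq_w (fun y => mem_perm_iota y perm_b).
case/splitPr: x_b => b1 [|y b2] uniq_c' uniq_w' lt_b;
  rewrite (catA _ (m :: b1)) in uniq_w' *.
  by rewrite !next_last ?eqxx.
rewrite -!cat_cons in uniq_w' uniq_c' *; rewrite !next_cat_cons2 // ifN_eq //.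
by rewrite neq_ltn -lt_b mem_cat !inE eqxx !orbT.
Qed.

End NextIotaMax.

(** * Decreasing subsequences of the one-line notation *)

(* [f'] is [f] after inserting [m.+1] right after [m] in the cycle. *)
Section DescCatMax.
Variables (f f' : nat -> nat) (m : nat).
Hypothesis f_le : forall x, x <= m -> f x <= m.
Hypothesis f'E : forall x,
  f' x = if x == m then m.+1 else if x == m.+1 then f m else f x.

Let cat_max_cases x : x < m.+2 -> (x < m /\ f' x = f x /\ f x <= m) \/
  (x = m /\ f' x = m.+1) \/ (x = m.+1 /\ f' x = f m /\ f m <= m).
Proof.
move=> lt_x; rewrite f'E; case: eqP => [->|ne_xm]; first by right; left.
by case: eqP => [->|ne_xSm]; [right; right | left]; rewrite ?f_le //; lia.
Qed.

Lemma desc3_cat_max : desc3 f' m.+2 <-> desc3 f m.+1.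
Proof.
split=> -[x [y [z ord_xyz]]].
  have := cat_max_cases (x := x) ltac:(lia); have := cat_max_cases (x := y) ltac:(lia).
  have := cat_max_cases (x := z) ltac:(lia) => cz cy cx.
  have [lt_ym [lt_zm|eq_z]] : y < m /\ (z < m \/ z = m.+1) by lia.
    by exists x, y, z; lia.
  by exists x, y, m; lia.
have := cat_max_cases (x := x) ltac:(lia); have := cat_max_cases (x := y) ltac:(lia).
have := cat_max_cases (x := z) ltac:(lia); have := cat_max_cases (x := m.+1) ltac:(lia).
move=> cSm cz cy cx; have [lt_zm|le_mz] := ltnP z m.
  by exists x, y, z; lia.
have eq_zm : z = m by lia.
by subst z; exists x, y, m.+1; lia.
Qed.

Lemma desc4_cat_max : desc4 f' m.+2 -> desc4 f m.+1.
Proof.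
case=> x1 [x2 [x3 [x4 ord_x]]].
have := cat_max_cases (x := x1) ltac:(lia); have := cat_max_cases (x := x2) ltac:(lia).
have := cat_max_cases (x := x3) ltac:(lia); have := cat_max_cases (x := x4) ltac:(lia).
move=> c4 c3 c2 c1; have [lt_x3m [lt_x4m|eq_x4]] : x3 < m /\ (x4 < m \/ x4 = m.+1) by lia.
  by exists x1, x2, x3, x4; lia.
by exists x1, x2, x3, m; lia.
Qed.

End DescCatMax.

(* [f'] arises from the cyclic permutation [f] of [0, j] by replacing [j] in its cycle
   with the run [m.+1, j, j.+1, ..., m]. *)
Section DescIotaMax.
Variables (f f' : nat -> nat) (m j : nat).
Hypothesis le_jm : j <= m.
Hypotheses (f_le : forall x, x <= j -> f x <= j) (f_j : f j < j).
Hypothesis f_hits_j : exists2 x0, x0 < j & f x0 = j.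
Hypothesis f'_low : forall x, x < j -> f' x = if f x == j then m.+1 else f x.
Hypothesis f'_run : forall x, j <= x < m -> f' x = x.+1.
Hypotheses (f'_max : f' m = f j) (f'_top : f' m.+1 = j).

Let iota_max_cases x : x < m.+2 ->
  (x < j /\ ((f x = j /\ f' x = m.+1) \/ (f x < j /\ f' x = f x))) \/
  (j <= x < m /\ f' x = x.+1) \/ (x = m /\ f' x = f j) \/ (x = m.+1 /\ f' x = j).
Proof.
move=> lt_x; have [lt_xj|le_jx] := ltnP x j.
  by left; split=> //; rewrite f'_low //; have := f_le (ltnW lt_xj); case: eqP; lia.
have [lt_xm|le_mx] := ltnP x m; first by right; left; rewrite f'_run ?le_jx.
case: (x =P m) => [->|ne_xm]; first by right; right; left.
have -> : x = m.+1 by lia.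
by right; right; right.
Qed.

Lemma desc4_iota_max : desc4 f' m.+2 -> desc4 f j.+1.
Proof.
case=> x1 [x2 [x3 [x4 ord_x]]].
have := iota_max_cases (x := x1) ltac:(lia); have := iota_max_cases (x := x2) ltac:(lia).
have := iota_max_cases (x := x3) ltac:(lia); have := iota_max_cases (x := x4) ltac:(lia).
move=> c4 c3 c2 c1; have [lt_x3j [lt_x4j|eq_x4]] : x3 < j /\ (x4 < j \/ x4 = m) by lia.
  by exists x1, x2, x3, x4; lia.
by exists x1, x2, x3, j; lia.
Qed.

Lemma desc3_iota_max : desc3 f' m.+2 <-> j < m \/ desc3 f j.+1.
Proof.
split=> [[x [y [z ord_xyz]]]|[lt_jm|[x [y [z ord_xyz]]]]].
- have [lt_jm|le_mj] := ltnP j m; [by left | right].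
  have := iota_max_cases (x := x) ltac:(lia); have := iota_max_cases (x := y) ltac:(lia).
  have := iota_max_cases (x := z) ltac:(lia) => cz cy cx.
  have [lt_yj [lt_zj|eq_z]] : y < j /\ (z < j \/ z = m) by lia.
    by exists x, y, z; lia.
  by exists x, y, j; lia.
- case: f_hits_j => x0 lt_x0j f_x0.
  have := iota_max_cases (x := x0) ltac:(lia); have := iota_max_cases (x := j) ltac:(lia).
  have := iota_max_cases (x := m.+1) ltac:(lia) => cSm cj cx0.
  by exists x0, j, m.+1; lia.
have := iota_max_cases (x := x) ltac:(lia); have := iota_max_cases (x := y) ltac:(lia).
have := iota_max_cases (x := z) ltac:(lia); have := iota_max_cases (x := m) ltac:(lia).
have := f_le (x := x) ltac:(lia); have := f_le (x := y) ltac:(lia).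
have := f_le (x := z) ltac:(lia) => fz fy fx cm cz cy cx.
have [lt_zj|le_jz] := ltnP z j.
  by exists x, y, z; lia.
have eq_zj : z = j by lia.
by subst z; exists x, y, m; lia.
Qed.

End DescIotaMax.

Lemma desc3_next_cat_max m a : perm_eq a (iota 0 m) ->
  desc3 (next (m.+1 :: a ++ [:: m])) m.+2 <-> desc3 (next (m :: a)) m.+1.
Proof. by move=> perm_a; apply: desc3_cat_max; [exact: next_max_cons_le | exact: next_cat_max]. Qed.

Lemma desc4_next_cat_max m a : perm_eq a (iota 0 m) ->
  desc4 (next (m.+1 :: a ++ [:: m])) m.+2 -> desc4 (next (m :: a)) m.+1.
Proof. by move=> perm_a; apply: desc4_cat_max; [exact: next_max_cons_le | exact: next_cat_max]. Qed.

Lemma desc3_next_iota_max m j b : 0 < j <= m -> perm_eq b (iota 0 j) ->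
  desc3 (next (m.+1 :: iota j (m - j) ++ m :: b)) m.+2 <->
  j < m \/ desc3 (next (j :: b)) j.+1.
Proof.
case/andP=> lt0j le_jm perm_b; apply: desc3_iota_max => //.
- exact: next_max_cons_le.
- exact: next_max_cons_max.
- exact: next_max_cons_hits.
- exact: next_iota_max_low.
- exact: next_iota_max_run.
- exact: next_iota_max_max.
- exact: next_iota_max_top.
Qed.

Lemma desc4_next_iota_max m j b : 0 < j <= m -> perm_eq b (iota 0 j) ->
  desc4 (next (m.+1 :: iota j (m - j) ++ m :: b)) m.+2 -> desc4 (next (j :: b)) j.+1.
Proof.
case/andP=> lt0j le_jm perm_b; apply: desc4_iota_max => //.
- exact: next_max_cons_le.
- exact: next_max_cons_max.
- exact: next_iota_max_low.
- exact: next_iota_max_run.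
- exact: next_iota_max_max.
- exact: next_iota_max_top.
Qed.

Lemma words_no_desc4 m u : u \in words m -> ~ desc4 (next (m :: u)) m.+1.
Proof.
elim/ltn_ind: m u => -[|m] IHm u.
  by move=> _ [x1 [x2 [x3 [x4 ord_x]]]]; lia.
case/wordsSP=> [[a a_m ->]|[j [b [j_m b_j ->]]]].
  by case/mem_words: (a_m) => perm_a _ /(desc4_next_cat_max perm_a); apply: IHm a_m.
case/mem_words: (b_j) => perm_b _ /(desc4_next_iota_max j_m perm_b); apply: IHm b_j.
by case/andP: j_m.
Qed.

Definition avoids321_next m u := avoids (map (next (m :: u)) (iota 0 m.+1)) (delta 3).

Lemma avoids321_nextP m u : reflect (~ desc3 (next (m :: u)) m.+1) (avoids321_next m u).
Proof.
rewrite /avoids321_next; apply: (iffP idP) => [avoid /map_iota_delta3Pn|no_desc].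
  by rewrite avoid.
by apply/negPn/negP => /map_iota_delta3Pn.
Qed.

Lemma count_words_avoid321 m : 0 < m -> count (avoids321_next m) (words m) = 2 ^ (m - 1).
Proof.
elim/ltn_ind: m => -[//|[|m]] IHm _.
  have avoid_0 : avoids321_next 1 [:: 0] by apply/avoids321_nextP => -[x [y [z]]]; lia.
  by rewrite wordsS /= avoid_0.
rewrite wordsS count_cat count_map count_flatten -map_comp.
have -> : iota 1 m.+1 = iota 1 m ++ [:: m.+1] by rewrite -[m.+1]addn1 iotaD add1n addn1.
rewrite map_cat sumn_cat /= addn0.
rewrite {1}sumnE big_map big1_seq ?add0n => [|j /andP [_]]; last first.
  rewrite mem_iota => /andP [lt0j lt_jm] /=; rewrite count_map -(count_pred0 (words j)).
  apply: eq_in_count => b /mem_words [perm_b _] /=; apply/negbTE/avoids321_nextP.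
  by apply; apply/desc3_next_iota_max => //; [lia | left; lia].
have count_m (P : pred (seq nat)) :
    {in words m.+1, forall u, P u = avoids321_next m.+1 u} -> count P (words m.+1) = 2 ^ m.
  by move/eq_in_count => ->; rewrite IHm ?ltnSn // subSS subn0.
rewrite count_map !count_m ?addnn -?mul2n -?expnS ?subSS ?subn0 // => u.
  have le_SS : 0 < m.+1 <= m.+1 by rewrite leqnn.
  case/mem_words=> perm_u _; apply/avoids321_nextP/avoids321_nextP=> no_desc.
    by move=> desc_u; apply: no_desc; apply/(desc3_next_iota_max le_SS perm_u); right.
  by case/(desc3_next_iota_max le_SS perm_u); rewrite ?ltnn.
case/mem_words=> perm_u _.
by apply/avoids321_nextP/avoids321_nextP=> no_desc /(desc3_next_cat_max perm_u).
Qed.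

(** * From cyclic permutations to words *)

Lemma fcycle_traject (T : eqType) (f : T -> T) x k :
  iter k.+1 f x = x -> fcycle f (traject f x k.+1).
Proof.
move=> iter_x; rewrite trajectS /=.
have -> : rcons (traject f (f x) k) x = traject f (f x) k.+1.
  by rewrite trajectSr -iterSr iter_x.
exact: fpath_traject.
Qed.

Lemma traject_rot (T : Type) (f : T -> T) x m k : iter m f x = x -> k <= m ->
  traject f (iter k f x) m = rot k (traject f x m).
Proof.
case: m => [|m] iter_x; first by case: k.
elim: k => [|k IHk] lt_km; first by rewrite rot0.
rewrite rotS ?size_traject // -IHk 1?ltnW // iterS.
set y := iter k f x; have iter_y : iter m.+1 f y = y by rewrite -iterD addnC iterD iter_x.
by rewrite [in RHS]trajectS rot1_cons trajectSr -iterSr iter_y.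
Qed.

Lemma traject_next (T : eqType) (y : T) l :
  uniq (y :: l) -> traject (next (y :: l)) y (size l).+1 = y :: l.
Proof.
move/cycle_next => /fpathP [k def_l]; have := congr1 size def_l.
rewrite size_rcons size_traject => sz_k; rewrite -sz_k trajectSr in def_l.
by case/rcons_inj: def_l => def_l _; rewrite trajectS -def_l.
Qed.

Lemma eq_in_traject (T : Type) (P : T -> Prop) (f g : T -> T) x k :
  (forall y, P y -> f y = g y) -> (forall y, P y -> P (f y)) -> P x ->
  traject f x k = traject g x k.
Proof.
move=> eq_fg P_f; elim: k x => //= k IHk x Px.
by rewrite IHk; [rewrite eq_fg | apply: P_f].
Qed.

Section MaxCycle.
Variable N : nat.
Local Notation n := N.+1.
Implicit Types p : {perm 'I_n}.

Lemma pfun_val p (i : 'I_n) : pfun p i = p i.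
Proof. by rewrite /pfun valK. Qed.

Lemma traject_pfun p (i : 'I_n) k : traject (pfun p) i k = map val (traject p i k).
Proof. by elim: k i => [|k IHk] i //=; rewrite pfun_val IHk. Qed.

Lemma cyclic_porbit p i : cyclic_perm p -> porbit p i = [set: 'I_n].
Proof.
case/existsP=> x /eqP card_x.
have orbit_x : porbit p x = [set: 'I_n].
  by apply/eqP; rewrite eqEcard subsetT cardsT card_ord card_x leqnn.
by rewrite -orbit_x; apply/eqP; rewrite eq_porbit_mem orbit_x inE.
Qed.

Lemma iter_pfun p (i : 'I_n) k : iter k (pfun p) i = iter k p i.
Proof. by elim: k => //= k IHk; rewrite IHk pfun_val. Qed.

Definition max_cycle p := traject (pfun p) N n.

Lemma max_cycleE p : max_cycle p = N :: behead (max_cycle p).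
Proof. by []. Qed.

Lemma max_cycle_val p : max_cycle p = map val (traject p ord_max n).
Proof. exact: traject_pfun p ord_max n. Qed.

Section Cyclic.
Variables (p : {perm 'I_n}) (cyclic_p : cyclic_perm p).

Let card_porbit i : #|porbit p i| = n.
Proof. by rewrite cyclic_porbit // cardsT card_ord. Qed.

Let iter_pfun_max : iter n (pfun p) N = N.
Proof.
have := iter_porbit p ord_max; rewrite card_porbit => iter_max.
by change (iter n (pfun p) (@ord_max N) = @ord_max N); rewrite iter_pfun iter_max.
Qed.

Lemma mem_max_cycle x : (x \in max_cycle p) = (x < n).
Proof.
apply/idP/idP=> [|lt_xn]; rewrite max_cycle_val; first by case/mapP=> i _ ->; apply: ltn_ord.
apply/mapP; exists (Ordinal lt_xn) => //.
by have := porbit_traject p ord_max (Ordinal lt_xn); rewrite card_porbit cyclic_porbit // inE => <-.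
Qed.

Lemma max_cycle_perm : perm_eq (max_cycle p) (iota 0 n).
Proof.
apply: uniq_perm; [|exact: iota_uniq|by move=> x; rewrite mem_max_cycle mem_iota].
rewrite max_cycle_val (map_inj_uniq val_inj).
by have := uniq_traject_porbit p ord_max; rewrite card_porbit.
Qed.

Lemma behead_max_cycle_perm : perm_eq (behead (max_cycle p)) (iota 0 N).
Proof.
rewrite -(perm_cons N) -max_cycleE (perm_trans max_cycle_perm) //.
by rewrite perm_sym perm_max_cons.
Qed.

Lemma next_max_cycle x : x < n -> next (max_cycle p) x = pfun p x.
Proof.
by move=> lt_xn; apply: (nextE (fcycle_traject iter_pfun_max)); rewrite mem_max_cycle.
Qed.

Lemma cycle_form_rot : exists k, cycle_form p = rot k (max_cycle p).
Proof.
have : 0 \in max_cycle p by rewrite mem_max_cycle.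
by case/trajectP=> k lt_kn def_0; exists k; rewrite /cycle_form def_0 traject_rot // ltnW.
Qed.

Lemma oneline_next : oneline p = map (next (max_cycle p)) (iota 0 n).
Proof.
rewrite /oneline -val_enum_ord -[in RHS]map_comp; apply/eq_in_map => i _.
by change (val (p i) = next (max_cycle p) i); rewrite next_max_cycle ?pfun_val.
Qed.

Lemma cycle_form_avoids1324P :
  [forall i : 'I_n, avoids (rot i (cycle_form p)) p1324] <->
  avoids132_3241 (behead (max_cycle p)).
Proof.
have [k ->] := cycle_form_rot.
rewrite avoids1324_rotP ?size_rot ?size_traject // rot_has1324_rot max_cycleE /=.
rewrite rot_has1324_max_cons => [|x]; first by rewrite /avoids132_3241; tauto.
by rewrite (mem_perm_iota _ behead_max_cycle_perm).
Qed.
End Cyclic.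

Section PermOfWord.
Variables (u : seq nat) (perm_u : perm_eq u (iota 0 N)).

Let uniq_w : uniq (N :: u). Proof. exact: uniq_max_cons. Qed.

Let next_lt x : x < n -> next (N :: u) x < n.
Proof. by rewrite -!(mem_perm_iota _ (perm_max_cons perm_u)) mem_next. Qed.

Let next_ord_inj : injective (fun i : 'I_n => Ordinal (next_lt (ltn_ord i))).
Proof. by move=> i j /(congr1 val) /= /(can_inj (prev_next uniq_w)) /val_inj. Qed.

Definition perm_of_word : {perm 'I_n} := perm next_ord_inj.

Lemma pfun_perm_of_word x : x < n -> pfun perm_of_word x = next (N :: u) x.
Proof. by move=> lt_xn; rewrite /pfun insubT /= permE. Qed.

Lemma max_cycle_perm_of_word : max_cycle perm_of_word = N :: u.
Proof.
rewrite -[in RHS](traject_next uniq_w) (perm_size perm_u) size_iota.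
apply: (eq_in_traject (P := fun x => x < n)) => // x lt_xn.
  exact: pfun_perm_of_word.
by rewrite pfun_perm_of_word ?next_lt.
Qed.

Lemma cyclic_perm_of_word : cyclic_perm perm_of_word.
Proof.
apply/existsP; exists ord_max; apply/eqP.
have -> : porbit perm_of_word ord_max = [set: 'I_n].
  apply/setP=> i; rewrite inE.
  have : val i \in max_cycle perm_of_word.
    by rewrite max_cycle_perm_of_word (mem_perm_iota _ (perm_max_cons perm_u)) ltn_ord.
  rewrite max_cycle_val => /mapP [j /trajectP [k _ ->] /val_inj ->].
  by rewrite -permX mem_porbit.
by rewrite cardsT card_ord.
Qed.
End PermOfWord.

Lemma max_cycle_inj p q : cyclic_perm p -> cyclic_perm q ->
  max_cycle p = max_cycle q -> p = q.
Proof.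
move=> cyclic_p cyclic_q eq_pq; apply/permP=> i; apply: ord_inj.
by rewrite -!pfun_val -!next_max_cycle // eq_pq.
Qed.

Lemma a_circ_count k : a_circ n k =
  count (fun u => avoids (map (next (N :: u)) (iota 0 n)) (delta k)) (words N).
Proof.
set P := fun u => _; rewrite /a_circ cardE -size_filter.
set S := enum _; have S_P p : p \in S ->
    [/\ cyclic_perm p, avoids (oneline p) (delta k) &
        [forall i : 'I_n, avoids (rot i (cycle_form p)) p1324]].
  by rewrite mem_enum inE => /and3P.
rewrite -(size_map (fun p => behead (max_cycle p))); apply: perm_size; apply: uniq_perm.
- rewrite map_inj_in_uniq ?enum_uniq // => p q /S_P [cyclic_p _ _] /S_P [cyclic_q _ _] eq_pq.
  by apply: max_cycle_inj; rewrite // [LHS]max_cycleE [RHS]max_cycleE eq_pq.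
- by rewrite filter_uniq ?uniq_words.
move=> u; rewrite mem_filter; apply/mapP/andP=> [[p /S_P [cyclic_p avoid_p avoid_cp] ->]|].
  rewrite /P -max_cycleE -oneline_next //; split=> //; apply/mem_words.
  by split; [exact: behead_max_cycle_perm | exact/cycle_form_avoids1324P].
case=> P_u /mem_words [perm_u ok_u]; exists (perm_of_word perm_u).
  have cyclic_pu := cyclic_perm_of_word perm_u.
  rewrite mem_enum inE; apply/and3P; split=> //.
    by rewrite oneline_next // max_cycle_perm_of_word.
  by apply/cycle_form_avoids1324P; rewrite ?max_cycle_perm_of_word.
by rewrite max_cycle_perm_of_word.
Qed.
End MaxCycle.

Unset Implicit Arguments.

Theorem theorem3p1 (n : nat) : 3 <= n ->
  a_circ n 3 = 2 ^ (n - 2) /\ (forall k : nat, 4 <= k -> a_circ n k = fib (2 * n - 3)).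
Proof.
case: n => [//|N] le3n; split=> [|k le4k]; rewrite a_circ_count.
  by rewrite count_words_avoid321 ?subSS //; lia.
rewrite (eq_in_count (a2 := predT)) => [|u u_N]; last first.
  exact: map_iota_avoids_delta le4k (words_no_desc4 u_N).
by rewrite count_predT size_words; [congr fib; lia | lia].
Qed.
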